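(* Let $\beta\subset\mathcal B$ be such that the $\beta$-state $\Sigma_\beta$ is not contradictory. If $\Sigma_\beta$ is trivial (i.e. it has no vertices, no edges and no links), then $\Sigma_\beta$ is solvable and $C_\beta^M$ is a point.
   Context: Let $Q$ be a quiver with finite $Q_0,Q_1$, $M$ a finite-dimensional complex representation with ordered basis $\mathcal B=\bigcup_p\mathcal B_p$ (bases $\mathcal B_p$ of $M_p$, total order on $\mathcal B$); $M_v(i)=\sum_j\mu_{v,i,j}j$; coefficient quiver $\Gamma$ with vertices $\mathcal B$, arrows $(v,i,j)$ with $\mu_{v,i,j}\ne0$, natural map $F:\Gamma\to Q$. Identify $M$ with $\mathbb C^d$ via $\mathcal B$; for $|\beta|=e$, $\Delta_\beta$ is the Plücker coordinate, $\beta\le\beta'$ iff the $l$-th smallest element of $\beta$ is $\le$ that of $\beta'$ for all $l$, $C_\beta(d)=\{V:\Delta_\beta(V)\ne0,\Delta_{\beta'}(V)=0\ \forall\beta'>\beta\}$, and $C_\beta^M$ is the variety of subrepresentations $N$ of $M$ with $\bigoplus_pN_p\in C_\beta(d)$. Schubert system: $E(v,t,s)=\sum_{(v,s',t')\in\Gamma_1}\mu_{v,s',t'}w_{t,t'}w_{s',s}-\sum_{(v,s',t)\in\Gamma_1}\mu_{v,s',t}w_{s',s}$ for $v:p\to q$, $s\in F^{-1}(p)$, $t\in F^{-1}(q)$; $\mathrm{Rel}^2=\{(i,j):F(i)=F(j),i\le j\}$; $\mathrm{Rel}^3$ = such $(v,t,s)$ with some $(v,s',t')\in\Gamma_1$,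 $s\ge s'$, $t\le t'$; $E(v,t,s)$ is a polynomial in $w_{i,j}$, $(i,j)\in\mathrm{Rel}^2$ (others set to $0$). $\Sigma$: graph on $\mathrm{Rel}^2\sqcup\mathrm{Rel}^3$, edge $\{(i,j),(v,t,s)\}$ iff $w_{i,j}$ occurs in $E(v,t,s)$, links $\lambda=((v,t,s),S)$ whenever $\prod_Sw_{i,j}$ occurs with nonzero coefficient $\mu_\lambda$. A partial evaluation is a partial $\mathrm{ev}:\mathrm{Rel}^2\dashrightarrow\mathbb C$ such that for each triple and neighbour $(k,l)$: if all other neighbours are in the domain then so is $(k,l)$ and $\sum_\lambda\mu_\lambda\prod_S\mathrm{ev}=0$. $f_\beta(i,j)=1$ if $i=j\in\beta$, $0$ if $i\in\beta,i\ne j$, $0$ if $j\notin\beta$, undefined otherwise. $\Sigma_\beta$ is contradictory if no partial evaluation extends $f_\beta$; else $\mathrm{ev}_\beta$ is the unique minimal one. For $\lambda=((v,t,s),S)$, $\mu_{\beta,\lambda}=\sum\mu_{\lambda'}\prod_{S'\cap\mathrm{dom}\,\mathrm{ev}_\beta}\mathrm{ev}_\beta$ over links $\lambda'=((v,t,s),S')$ of $\Sigma$ with $S'\setminus\mathrm{dom}\,\mathrm{ev}_\beta=S$; $\Sigma_\beta$ has links the $\lambda$ with $\mu_{\beta,\lambda}\ne0$, vertices the pairs outside $\mathrm{dom}\,\mathrm{ev}_\beta$ and the triples that are tips of its links, edges the edges $\{\tau,\pi\}$ of $\Sigma$ with $\pi\in S$ for a link $(\tau,S)$ of $\Sigma_\beta$.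 A solution of such a system is an orientation of its edges such that (S1) each triple has exactly one outgoing edge $\{\tau,\pi\}$, and it is simply linked ($(\tau,\{\pi\})$ is a link and the edge is a leg of no other link); (S2) each pair has at most one incoming edge; (S3) no oriented cycles. Solvable = has a solution. *)

From mathcomp Require Import all_boot all_algebra.
From mathcomp Require Import complex.
From mathcomp Require Import Rstruct.
From Stdlib Require Import Relations.

Set Implicit Arguments.
Unset Strict Implicit.
Unset Printing Implicit Defensive.

Import GRing.Theory.
Local Open Scope ring_scope.

Definition C : closedFieldType := (Rdefinitions.R)[i].

Section SchubertSystems.

Variables (Q0 Q1 : finType) (src tgt : Q1 -> Q0).
(* The ordered basis B of M is identified with 'I_d, with its natural order;
   F : B -> Q0 sends a basis vector of M_p to p. *)
Variable d : nat.
Variable F : 'I_d -> Q0.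
(* mu v i j = mu_{v,i,j}, i.e. M_v(i) = sum_j mu_{v,i,j} j. *)
Variable mu : Q1 -> 'I_d -> 'I_d -> C.

Definition is_coef_data : Prop :=
  forall v i j, mu v i j != 0 -> F i = src v /\ F j = tgt v.

(* M_p as a subspace of C^d (row space of the coordinate projection). *)
Definition Mspace (p : Q0) : 'M[C]_d :=
  \matrix_(i, j) ((i == j) && (F i == p))%:R.

(* The linear map M_v, acting on row vectors: e_i *m Mmap v = sum_j mu_{v,i,j} e_j. *)
Definition Mmap (v : Q1) : 'M[C]_d := \matrix_(i, j) mu v i j.

Definition is_subrep (N : Q0 -> 'M[C]_d) : Prop :=
  (forall p, (N p <= Mspace p)%MS) /\
  (forall v, (N (src v) *m Mmap v <= N (tgt v))%MS).

Definition rk (b : {set 'I_d}) (k : 'I_d) : nat := #|[set l in b | (l < k)%N]|.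

(* Plücker coordinate Delta_b of the row space of A : 'M_(r, d) (r = #|b|):
   the r x r minor on the columns in b, in increasing order. *)
Definition plucker (r : nat) (A : 'M[C]_(r, d)) (b : {set 'I_d}) : C :=
  \det (\matrix_(i < r, j < r) \sum_(k in b | rk b k == j) A i k).

(* b <= b' : the l-th smallest element of b is <= the l-th smallest of b'. *)
Definition bruhat_le (b b' : {set 'I_d}) : Prop :=
  #|b| = #|b'| /\
  forall k k', k \in b -> k' \in b' -> rk b k = rk b' k' -> (k <= k')%N.

Definition in_schubert_cell (beta : {set 'I_d}) (V : 'M[C]_d) : Prop :=
  \rank V = #|beta| /\
  plucker (row_base V) beta != 0 /\
  (forall beta', bruhat_le beta beta' -> beta' != beta ->
     plucker (row_base V) beta' = 0).

Definition in_CbetaM (beta : {set 'I_d}) (N : Q0 -> 'M[C]_d) : Prop :=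
  is_subrep N /\ in_schubert_cell beta (\sum_p N p)%MS.

(* C_beta^M is a point: it has exactly one element (subrepresentations being
   equal when all their subspaces N_p are equal). *)
Definition CbetaM_is_point (beta : {set 'I_d}) : Prop :=
  exists N0, in_CbetaM beta N0 /\
    forall N, in_CbetaM beta N -> forall p, (N p == N0 p)%MS.

Definition pair := ('I_d * 'I_d)%type.
Definition triple := (Q1 * 'I_d * 'I_d)%type.

Definition gamma_arrow (v : Q1) (i j : 'I_d) : bool := mu v i j != 0.

Definition rel2 (x : pair) : bool := (F x.1 == F x.2) && (x.1 <= x.2)%N.

Definition rel3 (tau : triple) : Prop :=
  let: (v, t, s) := tau in
  F s = src v /\ F t = tgt v /\
  exists s' t', gamma_arrow v s' t' /\ (s' <= s)%N /\ (t <= t')%N.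

(* Monomials in the variables w_{i,j}: exponent vectors. *)
Definition mono := {ffun pair -> nat}.
Definition mono1 (x : pair) : mono := [ffun y => (y == x) : nat].
Definition mono2 (x y : pair) : mono := [ffun z => ((z == x) : nat) + (z == y)].

(* E(v,t,s) written as a formal list of terms (coefficient, monomial),
   where variables w_{i,j} with (i,j) not in Rel^2 are set to 0. *)
Definition Eterms (tau : triple) : seq (C * mono) :=
  let: (v, t, s) := tau in
  [seq (mu v x.1 x.2, mono2 (t, x.2) (x.1, s)) |
     x <- enum [pred x : 'I_d * 'I_d |
                 [&& gamma_arrow v x.1 x.2, rel2 (t, x.2) & rel2 (x.1, s)]]]
  ++ [seq (- mu v s' t, mono1 (s', s)) |
        s' <- enum [pred s' : 'I_d | gamma_arrow v s' t && rel2 (s', s)]].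

Definition coefE (tau : triple) (m : mono) : C :=
  \sum_(x <- Eterms tau | x.2 == m) x.1.

Definition monosE (tau : triple) : seq mono :=
  [seq m <- undup [seq x.2 | x <- Eterms tau] | coefE tau m != 0].

(* links lambda = (tau, m) of Sigma, with legs the variables occurring in m,
   and coefficient mu_lambda = coefE tau m. *)
Definition link (tau : triple) (m : mono) : Prop :=
  rel3 tau /\ coefE tau m != 0.

Definition edge (tau : triple) (pi : pair) : Prop :=
  rel2 pi /\ exists m, link tau m /\ (0 < m pi)%N.

Definition peval := pair -> option C.

Definition in_dom (ev : peval) (x : pair) : bool := ev x != None.

Definition val_mono (ev : peval) (m : mono) : C :=
  \prod_(x : pair) (odflt 0 (ev x)) ^+ m x.

Definition evalE (ev : peval) (tau : triple) : C :=
  \sum_(m <- monosE tau) coefE tau m * val_mono ev m.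

Definition is_partial_eval (ev : peval) : Prop :=
  (forall x, in_dom ev x -> rel2 x) /\
  forall tau pi, rel3 tau -> edge tau pi ->
    (forall pi', edge tau pi' -> pi' <> pi -> in_dom ev pi') ->
    in_dom ev pi /\ evalE ev tau = 0.

Definition pe_extends (ev ev' : peval) : Prop :=
  forall x, in_dom ev x -> ev' x = ev x.

Definition f_beta (beta : {set 'I_d}) (x : pair) : option C :=
  if x.1 \in beta then (if x.1 == x.2 then Some 1 else Some 0)
  else if x.2 \notin beta then Some 0 else None.

Definition extends_f_beta (beta : {set 'I_d}) (ev : peval) : Prop :=
  forall x, rel2 x -> f_beta beta x != None -> ev x = f_beta beta x.

Definition contradictory (beta : {set 'I_d}) : Prop :=
  ~ exists ev, is_partial_eval ev /\ extends_f_beta beta ev.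

(* ev is ev_beta: the unique minimal (= least, w.r.t. extension) partial
   evaluation extending f_beta. *)
Definition is_ev_beta (beta : {set 'I_d}) (ev : peval) : Prop :=
  is_partial_eval ev /\ extends_f_beta beta ev /\
  forall ev', is_partial_eval ev' -> extends_f_beta beta ev' -> pe_extends ev ev'.

Definition restr_out (ev : peval) (m : mono) : mono :=
  [ffun x => if in_dom ev x then 0%N else m x].

Definition mu_beta (ev : peval) (tau : triple) (m : mono) : C :=
  \sum_(m' <- monosE tau | restr_out ev m' == m)
     coefE tau m' * \prod_(x : pair | in_dom ev x) (odflt 0 (ev x)) ^+ m' x.

Definition link_beta (ev : peval) (tau : triple) (m : mono) : Prop :=
  rel3 tau /\ mu_beta ev tau m != 0.

Definition pair_vertex_beta (ev : peval) (pi : pair) : Prop :=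
  rel2 pi /\ ~~ in_dom ev pi.

Definition triple_vertex_beta (ev : peval) (tau : triple) : Prop :=
  exists m, link_beta ev tau m.

Definition edge_beta (ev : peval) (tau : triple) (pi : pair) : Prop :=
  edge tau pi /\ exists m, link_beta ev tau m /\ (0 < m pi)%N.

Definition trivial_state (ev : peval) : Prop :=
  (forall pi, ~ pair_vertex_beta ev pi) /\
  (forall tau, ~ triple_vertex_beta ev tau) /\
  (forall tau pi, ~ edge_beta ev tau pi) /\
  (forall tau m, ~ link_beta ev tau m).

Record system := System {
  sys_pair : pair -> Prop;
  sys_triple : triple -> Prop;
  sys_edge : triple -> pair -> Prop;
  sys_link : triple -> mono -> Prop
}.

Definition Sigma_beta (ev : peval) : system :=
  System (pair_vertex_beta ev) (triple_vertex_beta ev) (edge_beta ev) (link_beta ev).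

(* An orientation: o tau pi = true means the edge {tau, pi} is oriented
   tau -> pi, false means pi -> tau. *)
Definition arc (S : system) (o : triple -> pair -> bool)
    (a b : pair + triple) : Prop :=
  match a, b with
  | inr tau, inl pi => sys_edge S tau pi /\ o tau pi
  | inl pi, inr tau => sys_edge S tau pi /\ ~~ o tau pi
  | _, _ => False
  end.

Definition is_solution (S : system) (o : triple -> pair -> bool) : Prop :=
  (forall tau, sys_triple S tau ->
     exists pi, (sys_edge S tau pi /\ o tau pi) /\
       (forall pi', sys_edge S tau pi' -> o tau pi' -> pi' = pi) /\
       sys_link S tau (mono1 pi) /\
       (forall m, sys_link S tau m -> (0 < m pi)%N -> m = mono1 pi)) /\
  (forall pi, sys_pair S pi -> forall tau1 tau2,
     sys_edge S tau1 pi -> o tau1 pi -> sys_edge S tau2 pi -> o tau2 pi ->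
     tau1 = tau2) /\
  ~ (exists x, clos_trans _ (arc S o) x x).

Definition solvable (S : system) : Prop := exists o, is_solution S o.

End SchubertSystems.

(* Because the beta-state is trivial, ev_beta is defined on all of Rel^2 and every E(v, t, s)
   vanishes at it, so the echelon matrix with entries ev_beta(i, j) spans a subrepresentation,
   and this subspace lies in C_beta(d). Conversely, a point N of C_beta^M has a basis normalised
   to the identity on the columns in beta; since N is graded and Delta_beta' vanishes for
   beta' > beta, this basis is in echelon form, its coefficients solve the Schubert system and
   extend f_beta, so by minimality they are the values of ev_beta. The trivial state has no
   edges, so any orientation is a solution. *)

From Pilot Require Import Defs.
From mathcomp Require Import all_boot all_algebra.
From mathcomp Require Import perm ring.
From Stdlib Require Import Classical FunctionalExtensionality.

Set Implicit Arguments.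
Unset Strict Implicit.
Unset Printing Implicit Defensive.

Import GRing.Theory.
Local Open Scope ring_scope.

Section RankInSet.
Variable d : nat.
Implicit Types (b : {set 'I_d}) (x y z i : 'I_d).

Lemma rk_lt b x y : x \in b -> (x < y)%N -> (rk b x < rk b y)%N.
Proof.
move=> xb xy; apply: proper_card; apply/properP; split.
  by apply/subsetP=> l; rewrite !inE => /andP[-> /ltn_trans]; apply.
by exists x; rewrite !inE ?ltnn ?andbF // xb.
Qed.

Lemma rk_le b x y : (x <= y)%N -> (rk b x <= rk b y)%N.
Proof.
move=> xy; apply: subset_leq_card; apply/subsetP=> l; rewrite !inE.
by case/andP=> -> lx; exact: leq_trans lx xy.
Qed.

Lemma rk_inj b x y : x \in b -> y \in b -> rk b x = rk b y -> x = y.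
Proof.
move=> xb yb e; case: (ltngtP x y) => h.
- by move: (rk_lt xb h); rewrite e ltnn.
- by move: (rk_lt yb h); rewrite e ltnn.
- exact: val_inj.
Qed.

Lemma rk_lt_card b x : x \in b -> (rk b x < #|b|)%N.
Proof.
move=> xb; apply: proper_card; apply/properP; split.
  by apply/subsetP=> l; rewrite !inE => /andP[].
by exists x; rewrite // !inE ltnn andbF.
Qed.

Lemma rk_onto b m : (m < #|b|)%N -> exists2 x, x \in b & rk b x = m.
Proof.
move=> hm; suff /exists_inP[x xb /eqP e] : [exists x in b, rk b x == m] by exists x.
apply: contraT; rewrite negb_exists => /forallP hn.
have U : uniq (m :: map (rk b) (enum b)).
  rewrite /= map_inj_in_uniq ?enum_uniq ?andbT.
    apply/mapP=> [[x]]; rewrite mem_enum => xb e.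
    by move: (hn x); rewrite xb e eqxx.
  by move=> x y; rewrite !mem_enum; apply: rk_inj.
have := uniq_leq_size U (s2 := iota 0 #|b|) _.
rewrite size_iota /= size_map -cardE ltnn; apply.
move=> z; rewrite inE mem_iota /= add0n => /orP[/eqP->//|/mapP[x]].
by rewrite mem_enum => xb ->; apply: rk_lt_card.
Qed.

(* [nth_of_rank b m] is the [m]-th smallest element of [b] (junk value 0 if [m >= #|b|]). *)
Definition nth_of_rank b (m : nat) : nat :=
  if [pick x in b | rk b x == m] is Some x then (x : nat) else 0%N.

Lemma nth_of_rankK b x : x \in b -> nth_of_rank b (rk b x) = x.
Proof.
move=> xb; rewrite /nth_of_rank; case: pickP => [y /andP[yb /eqP e]|h].
  by rewrite (rk_inj yb xb e).
by move: (h x); rewrite xb eqxx.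
Qed.

Lemma rk_swap_le b y i z : y \in b -> (y < i)%N ->
  (rk (i |: (b :\ y)) z <= rk b z)%N.
Proof.
move=> yb yi; rewrite /rk; case: (ltnP i z) => iz.
  rewrite (cardsD1 i [set l in i |: (b :\ y) | (l < z)%N]).
  rewrite (cardsD1 y [set l in b | (l < z)%N]) !inE eqxx yb iz (ltn_trans yi iz) /=.
  rewrite !add1n ltnS; apply: subset_leq_card; apply/subsetP=> l; rewrite !inE.
  by case/andP=> li /andP[/orP[/eqP e|/andP[-> ->]] ->] //; rewrite e eqxx in li.
apply: subset_leq_card; apply/subsetP=> l; rewrite !inE.
case/andP=> /orP[/eqP ->|/andP[_ ->]] // lz.
by move: (leq_trans lz iz); rewrite ltnn.
Qed.

Lemma rk_swap_lt b y i : y \in b -> (y < i)%N ->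
  (rk (i |: (b :\ y)) i < rk b i)%N.
Proof.
move=> yb yi; apply: proper_card; apply/properP; split.
  apply/subsetP=> l; rewrite !inE.
  by case/andP=> /orP[/eqP ->|/andP[_ ->]] //; rewrite ltnn.
exists y; first by rewrite !inE yb yi.
rewrite !inE eqxx yi andbT /= orbF.
by apply/eqP=> e; rewrite e ltnn in yi.
Qed.

Lemma bruhat_le_swap b y i : y \in b -> i \notin b -> (y < i)%N ->
  bruhat_le b (i |: (b :\ y)).
Proof.
move=> yb ib yi; split.
  by rewrite cardsU1 (cardsD1 y b) yb !inE (negbTE ib) andbF.
move=> k k' kb; rewrite !inE => hk' e; rewrite leqNgt; apply/negP=> kk.
case/orP: hk' => [/eqP ek|/andP[_ k'b]].
  subst k'; move: (rk_swap_lt yb yi); rewrite -e => h.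
  by move: (leq_trans h (rk_le b (ltnW kk))); rewrite ltnn.
move: (rk_swap_le k' yb yi); rewrite -e => h.
by move: (leq_ltn_trans h (rk_lt k'b kk)); rewrite ltnn.
Qed.

End RankInSet.

Section BruhatPermutation.
Variables (d n : nat) (b b' : {set 'I_d}).
Hypotheses (card_b : #|b| = n) (le_b_b' : bruhat_le b b').

Lemma nth_of_rank_bruhat (i : 'I_n) : (nth_of_rank b i <= nth_of_rank b' i)%N.
Proof.
have card_b' : #|b'| = n by case: le_b_b' => <-.
have [y yb ry] : exists2 y, y \in b & rk b y = i by apply: rk_onto; rewrite card_b.
have [y' y'b ry'] : exists2 y', y' \in b' & rk b' y' = i by apply: rk_onto; rewrite card_b'.
by rewrite -{1}ry -ry' !nth_of_rankK //; apply: le_b_b'.2 => //; rewrite ry ry'.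
Qed.

(* Summing over [i], the permutation [s] cannot lower the total, so all inequalities are equalities. *)
Lemma bruhat_perm_eq (s : 'S_n) :
  (forall i : 'I_n, nth_of_rank b' (s i) <= nth_of_rank b i)%N -> b = b'.
Proof.
move=> hle; have card_b' : #|b'| = n by case: le_b_b' => <-.
have hsum : (\sum_(i < n) nth_of_rank b' (s i) = \sum_(i < n) nth_of_rank b' i)%N.
  by rewrite [RHS](reindex_inj (@perm_inj _ s)).
have heq (i : 'I_n) : nth_of_rank b i = nth_of_rank b' i.
  apply/eqP; rewrite eqn_leq nth_of_rank_bruhat andTb; apply: contraT; rewrite -ltnNge => lt.
  have : (\sum_(j < n) nth_of_rank b j < \sum_(j < n) nth_of_rank b' j)%N.
    rewrite (bigD1 i) //= [X in (_ < X)%N](bigD1 i) //= -addSn.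
    by apply: leq_add => //; apply: leq_sum => j _; apply: nth_of_rank_bruhat.
  by rewrite -hsum ltnNge leq_sum.
have sub : b \subset b'.
  apply/subsetP => x xb; have rx : (rk b x < n)%N by rewrite -card_b rk_lt_card.
  have [y' y'b ry'] : exists2 y', y' \in b' & rk b' y' = Ordinal rx.
    by apply: rk_onto; rewrite card_b'.
  have ry : rk b' y' = rk b x by rewrite ry'.
  have := heq (Ordinal rx); rewrite /= nth_of_rankK // -ry nth_of_rankK // => e.
  by rewrite (val_inj e).
by apply/eqP; rewrite eqEcard sub card_b card_b' leqnn.
Qed.

End BruhatPermutation.

Section SelectionMatrix.
Variable d : nat.
Implicit Types (b : {set 'I_d}) (y : 'I_d).

(* Right multiplication by [sel_mx n b] extracts the columns indexed by [b], in increasing order. *)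
Definition sel_mx n b : 'M[C]_(d, n) := \matrix_(x, m) ((x \in b) && (rk b x == m))%:R.

Lemma plucker_sel n (A : 'M_(n, d)) b : plucker A b = \det (A *m sel_mx n b).
Proof.
congr (\det _); apply/matrixP=> i j; rewrite !mxE big_mkcond /=.
apply: eq_bigr=> k _; rewrite !mxE.
by case: (k \in b); case: (rk b k == j); rewrite /= ?mulr1 ?mulr0.
Qed.

Lemma mul_sel_mx n b k (Z : 'M_(k, d)) i y (c : 'I_n) :
  y \in b -> rk b y = c -> (Z *m sel_mx n b) i c = Z i y.
Proof.
move=> yb ry; rewrite mxE (bigD1 y) // mxE yb ry eqxx mulr1 big1 ?Monoid.mulm1 //.
move=> x xy; rewrite mxE; case xb: (x \in b); rewrite ?mulr0 //=.
case: eqP; rewrite ?mulr0 // -ry => /(rk_inj xb yb) e.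
by rewrite e eqxx in xy.
Qed.

Lemma mul_trsel_mx n b k (Z : 'M_(d, k)) i y (c : 'I_n) :
  y \in b -> rk b y = c -> ((sel_mx n b)^T *m Z) c i = Z y i.
Proof.
move=> yb ry; rewrite -[(sel_mx n b)^T *m Z]trmxK trmx_mul trmxK mxE.
by rewrite (mul_sel_mx _ _ yb ry) mxE.
Qed.

Lemma sel_mul_mx n b k (B : 'M_(n, k)) i y (c : 'I_n) :
  y \in b -> rk b y = c -> (sel_mx n b *m B) y i = B c i.
Proof.
move=> yb ry; rewrite mxE (bigD1 c) // mxE yb ry eqxx mul1r big1 ?Monoid.mulm1 //.
move=> m mc; rewrite mxE yb ry; case: eqP => [e|_]; rewrite ?mul0r //.
by case/eqP: mc; apply: val_inj; rewrite /= e.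
Qed.

Lemma sel_mul_mx0 n b k (B : 'M_(n, k)) i y :
  y \notin b -> (sel_mx n b *m B) y i = 0.
Proof. by move=> yb; rewrite mxE big1 // => m _; rewrite mxE (negbTE yb) mul0r. Qed.

Lemma trsel_sel_mx n b : #|b| = n -> (sel_mx n b)^T *m sel_mx n b = 1%:M.
Proof.
move=> hb; apply/matrixP=> m c.
have [y yb ry] : exists2 y, y \in b & rk b y = c by apply: rk_onto; rewrite hb.
by rewrite (mul_sel_mx _ _ yb ry) !mxE yb ry eq_sym.
Qed.

End SelectionMatrix.

Section GradedMatrices.
Variables (Q0 : finType) (d : nat) (F : 'I_d -> Q0).
Implicit Types (w : pair d -> C) (p q : Q0).

Lemma rel2E (i j : 'I_d) : rel2 F (i, j) = (F i == F j) && (i <= j)%N.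
Proof. by []. Qed.

Definition rel2_supported w := forall x, ~~ rel2 F x -> w x = 0.

(* Row [j] of [wmx w] has coordinates [w (i, j)]; for an echelon [w] the nonzero rows are
   [e_j + \sum_(i < j, i \notin b) w (i, j) e_i] for [j \in b]. *)
Definition wmx w : 'M[C]_d := \matrix_(j, i) w (i, j).

Definition wmx_at w p : 'M[C]_d := \matrix_(j, i) if F j == p then w (i, j) else 0.

Definition echelon (b : {set 'I_d}) w : Prop :=
  [/\ rel2_supported w, forall x, x.2 \notin b -> w x = 0 &
      forall x, x.1 \in b -> x.2 \in b -> w x = (x.1 == x.2)%:R].

Lemma mul_Mspace k (X : 'M[C]_(k, d)) p a i :
  (X *m Mspace F p) a i = if F i == p then X a i else 0.
Proof.
rewrite mxE (bigD1 i) // mxE eqxx big1 ?Monoid.mulm1.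
  by case: (F i == p); rewrite ?mulr1 ?mulr0.
by move=> j ji; rewrite mxE (negbTE ji) mulr0.
Qed.

Lemma Mspace_mul p q : Mspace F q *m Mspace F p = if p == q then Mspace F p else 0.
Proof.
apply/matrixP=> a i; rewrite mul_Mspace !mxE.
have [<- | pq] := eqVneq p q; rewrite ?eqxx ?(negbTE pq) ?mxE;
  by case: (a =P i) => [->|]; case: eqP => //= ->; rewrite ?eqxx ?(negbTE pq).
Qed.

Lemma Mspace_mulmx k (N : 'M[C]_(k, d)) p q : (N <= Mspace F q)%MS ->
  N *m Mspace F p = if p == q then N else 0.
Proof.
case/submxP=> X ->; rewrite -mulmxA Mspace_mul.
by case: eqP => [->|]; rewrite ?mulmx0.
Qed.

Lemma wmx_atE w : rel2_supported w -> forall p, wmx_at w p = wmx w *m Mspace F p.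
Proof.
move=> w0 p; apply/matrixP=> j i; rewrite mul_Mspace !mxE.
have [e|ne] := eqVneq (F i) (F j); first by rewrite e.
by rewrite w0 ?rel2E ?(negbTE ne) //; do 2 case: ifP.
Qed.

Lemma wmx_at_sub w p : (wmx_at w p <= wmx w)%MS.
Proof.
apply/submxP; exists (\matrix_(j, k) ((j == k) && (F j == p))%:R).
apply/matrixP=> j i; rewrite !mxE (bigD1 j) // !mxE eqxx big1 ?Monoid.mulm1.
  by case: (F j == p); rewrite ?mul1r ?mul0r.
by move=> k kj; rewrite mxE eq_sym (negbTE kj) mul0r.
Qed.

Lemma sumsmx_wmx_at w : ((\sum_p wmx_at w p)%MS == wmx w)%MS.
Proof.
apply/andP; split; first by apply/sumsmx_subP=> p _; apply: wmx_at_sub.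
have -> : wmx w = \sum_p wmx_at w p.
  apply/matrixP=> j i; rewrite summxE (bigD1 (F j)) // !mxE eqxx big1 ?Monoid.mulm1 //.
  by move=> q; rewrite mxE eq_sym => /negbTE ->.
by apply: summx_sub=> p _; exact: (sumsmx_sup p).
Qed.

Section GradedFamily.
Variable N : Q0 -> 'M[C]_d.
Hypothesis N_graded : forall p, (N p <= Mspace F p)%MS.

Lemma sumsmx_graded_Mspace p : ((\sum_q N q)%MS *m Mspace F p <= \sum_q N q)%MS.
Proof.
case/sub_sumsmxP: (submx_refl (\sum_q N q)%MS) => u eu.
rewrite {1}eu mulmx_suml (bigD1 p) // big1 ?Monoid.mulm1 => [|q qp].
  rewrite -mulmxA (Mspace_mulmx p (N_graded p)) eqxx.
  by apply: submx_trans (submxMl _ _) _; exact: (sumsmx_sup p).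
by rewrite -mulmxA (Mspace_mulmx p (N_graded q)) eq_sym (negbTE qp) mulmx0.
Qed.

Lemma eqmx_wmx_at w : rel2_supported w -> ((\sum_p N p)%MS == wmx w)%MS ->
  forall p, (N p == wmx_at w p)%MS.
Proof.
move=> w0 /andP[sNw swN] p; apply/andP; split.
  have /submxP[X eX] : (N p <= wmx w)%MS.
    by apply: submx_trans sNw; apply: (sumsmx_sup p).
  have NpE : N p *m Mspace F p = N p by rewrite (Mspace_mulmx p (N_graded p)) eqxx.
  rewrite -NpE eX -mulmxA -wmx_atE //.
  exact: submxMl.
case/sub_sumsmxP: swN => u eu.
rewrite wmx_atE // eu mulmx_suml (bigD1 p) // big1 ?Monoid.mulm1 => [|q qp].
  by rewrite -mulmxA (Mspace_mulmx p (N_graded p)) eqxx; apply: submxMl.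
by rewrite -mulmxA (Mspace_mulmx p (N_graded q)) eq_sym (negbTE qp) mulmx0.
Qed.

End GradedFamily.

End GradedMatrices.

Section EchelonInCell.
Variables (Q0 : finType) (d : nat) (F : 'I_d -> Q0).
Variables (b : {set 'I_d}) (w : pair d -> C).
Hypothesis w_echelon : echelon F b w.

Lemma trsel_wmx_sel n : #|b| = n -> ((sel_mx n b)^T *m wmx w) *m sel_mx n b = 1%:M.
Proof.
case: w_echelon => _ _ w_b hn; apply/matrixP => m c.
have [y yb ry] : exists2 y, y \in b & rk b y = c by apply: rk_onto; rewrite hn.
have [z zb rz] : exists2 z, z \in b & rk b z = m by apply: rk_onto; rewrite hn.
rewrite (mul_sel_mx _ _ yb ry) (mul_trsel_mx _ _ zb rz) !mxE (w_b (y, z) yb zb).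
suff -> : (y == z) = (m == c) by [].
apply/eqP/eqP => [e|e]; first by apply: val_inj; rewrite /= -rz -ry e.
by apply: (rk_inj yb zb); rewrite ry rz e.
Qed.

Lemma wmx_sel n : #|b| = n -> wmx w = sel_mx n b *m ((sel_mx n b)^T *m wmx w).
Proof.
case: w_echelon => _ w_nb _ hn; apply/matrixP => j i.
case jb: (j \in b); last by rewrite sel_mul_mx0 ?jb // mxE w_nb //= jb.
have rj : (rk b j < n)%N by rewrite -hn rk_lt_card.
by rewrite (sel_mul_mx _ _ jb (c := Ordinal rj)) // (mul_trsel_mx _ _ jb (c := Ordinal rj)).
Qed.

Lemma rank_wmx : \rank (wmx w) = #|b|.
Proof.
apply/anti_leq/andP; split.
  rewrite (wmx_sel (erefl #|b|)).
  by apply: leq_trans (mxrankM_maxl _ _) _; rewrite rank_leq_col.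
rewrite -{1}(mxrank1 C #|b|) -(trsel_wmx_sel (erefl #|b|)).
exact: leq_trans (mxrankM_maxl _ _) (mxrankM_maxr _ _).
Qed.

(* A nonzero term of the Leibniz expansion pairs the [i]-th element of [b] with a smaller or equal
   element of [b'], since [w] vanishes off [rel2]. *)
Lemma det_wmx_bruhat_gt n b' : #|b| = n -> bruhat_le b b' -> b' != b ->
  \det (((sel_mx n b)^T *m wmx w) *m sel_mx n b') = 0.
Proof.
case: w_echelon => w_rel2 _ _ hn le_bb' neq_b'b.
have card_b' : #|b'| = n by case: le_bb' => <-.
apply: big1 => s _; apply/eqP; rewrite mulf_eq0; apply/orP; right.
apply: contraT => nz; case/eqP: neq_b'b; symmetry.
apply: (bruhat_perm_eq hn le_bb' (s := s)) => i.
have [y yb ry] : exists2 y, y \in b & rk b y = i by apply: rk_onto; rewrite hn.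
have [y' y'b ry'] : exists2 y', y' \in b' & rk b' y' = s i by apply: rk_onto; rewrite card_b'.
move/prodf_neq0: nz => /(_ i isT).
rewrite (mul_sel_mx _ _ y'b ry') (mul_trsel_mx _ _ yb ry) mxE => nz.
have : rel2 F (y', y) by apply: contraTT nz => /w_rel2 ->; rewrite eqxx.
by rewrite rel2E -ry -ry' !nth_of_rankK // => /andP[].
Qed.

Lemma echelon_schubert_cell (V : 'M[C]_d) : (V == wmx w)%MS -> in_schubert_cell b V.
Proof.
move=> eqVw; have rkV : \rank V = #|b| by rewrite (eqmx_rank eqVw) rank_wmx.
set T := (sel_mx (\rank V) b)^T *m wmx w.
have /submxP[G eG] : (row_base V <= T)%MS.
  rewrite (eq_row_base V); apply: submx_trans (proj1 (andP eqVw)) _.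
  by rewrite {1}(wmx_sel (esym rkV)); apply: submxMl.
have detG : \det G != 0.
  rewrite -unitfE -unitmxE -row_free_unit /row_free; apply/eqP/anti_leq.
  by rewrite rank_leq_row /= -[X in (X <= _)%N](eq_row_base V) eG mxrankM_maxl.
have plE b' : plucker (row_base V) b' = \det G * \det (T *m sel_mx (\rank V) b').
  by rewrite plucker_sel eG -mulmxA det_mulmx.
split; first by [].
split; first by rewrite plE (trsel_wmx_sel (esym rkV)) det1 mulr1.
by move=> b' le_bb' neq_b'b; rewrite plE det_wmx_bruhat_gt ?mulr0.
Qed.

End EchelonInCell.

Section PivotMatrix.
Variables (Q0 : finType) (d r : nat) (F : 'I_d -> Q0) (b : {set 'I_d}).
Variable B : 'M[C]_(r, d).
Hypotheses (card_b : #|b| = r) (B_sel : B *m sel_mx r b = 1%:M).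

Lemma pivot_col k y (c : 'I_r) : y \in b -> rk b y = c -> B k y = (k == c)%:R.
Proof. by move=> yb ry; rewrite -(mul_sel_mx B k yb ry) B_sel mxE. Qed.

(* Multiplying [B *m Mspace F (F i) = Y *m B] by [sel_mx r b] gives [Y]; its row [c] vanishes. *)
Lemma pivot_graded y (c : 'I_r) i : (forall p, (B *m Mspace F p <= B)%MS) ->
  y \in b -> rk b y = c -> F i != F y -> B c i = 0.
Proof.
move=> B_graded yb ry Fiy; case/submxP: (B_graded (F i)) => Y eY.
have Y0 m : Y c m = 0.
  have [z zb rz] : exists2 z, z \in b & rk b z = m by apply: rk_onto; rewrite card_b.
  have := congr1 (fun X => (X *m sel_mx r b) c m) eY.
  rewrite /= -(mulmxA Y) B_sel mulmx1 => <-.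
  rewrite (mul_sel_mx _ _ zb rz) mul_Mspace (pivot_col c zb rz).
  case: eqP => // Fz; case: eqP => // cm.
  have ezy : z = y by apply: (rk_inj zb yb); rewrite rz ry cm.
  by move: Fiy; rewrite -Fz ezy eqxx.
have := congr1 (fun X : 'M_(r, d) => X c i) eY; rewrite /= mul_Mspace eqxx mxE => ->.
by rewrite big1 // => m _; rewrite Y0 mul0r.
Qed.

(* A vector in the left kernel of [B *m sel_mx r b'] has zero coordinates off [c] (columns
   [z \in b :\ y] of [B] are unit vectors), so column [i] forces [B c i = 0]. *)
Lemma pivot_swap y (c : 'I_r) i : y \in b -> rk b y = c -> i \notin b ->
  \det (B *m sel_mx r (i |: (b :\ y))) = 0 -> B c i = 0.
Proof.
move=> yb ry ib /eqP /det0P [x xnz hx].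
set b' := i |: (b :\ y).
have card_b' : #|b'| = r by rewrite cardsU1 !inE (negbTE ib) andbF -card_b (cardsD1 y b) yb.
have hxe j : (x *m (B *m sel_mx r b')) 0 j = 0 by rewrite hx mxE.
have xo m : m != c -> x 0 m = 0.
  move=> mc; have [z zb rz] : exists2 z, z \in b & rk b z = m by apply: rk_onto; rewrite card_b.
  have zb' : z \in b'.
    rewrite !inE zb andbT orbC; apply/orP; left; apply/eqP => ezy.
    by move: mc; rewrite -(inj_eq val_inj) /= -rz -ry ezy eqxx.
  have rz' : (rk b' z < r)%N by rewrite -card_b' rk_lt_card.
  have := hxe (Ordinal rz'); rewrite mulmxA (mul_sel_mx _ _ zb' (c := Ordinal rz') erefl) !mxE => <-.
  rewrite (bigD1 m) // (pivot_col m zb rz) eqxx mulr1 big1 ?Monoid.mulm1 //.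
  by move=> k km; rewrite (pivot_col k zb rz) (negbTE km) mulr0.
have ib' : i \in b' by rewrite !inE eqxx.
have ri : (rk b' i < r)%N by rewrite -card_b' rk_lt_card.
have := hxe (Ordinal ri); rewrite mulmxA (mul_sel_mx _ _ ib' (c := Ordinal ri) erefl) !mxE.
rewrite (bigD1 c) // big1 ?Monoid.mulm1 => [|k kc]; last by rewrite xo ?mul0r.
move/eqP; rewrite mulf_eq0 => /orP[/eqP xc | /eqP //].
case/negP: xnz; apply/eqP/rowP => m; rewrite mxE.
by have [->|] := eqVneq m c; [rewrite xc | apply: xo].
Qed.

End PivotMatrix.

Section CellEchelon.
Variables (Q0 : finType) (d : nat) (F : 'I_d -> Q0).
Variables (V : 'M[C]_d) (b : {set 'I_d}).
Hypotheses (V_graded : forall p, (V *m Mspace F p <= V)%MS)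
           (V_cell : in_schubert_cell b V).

Lemma card_cell : #|b| = \rank V.
Proof. by case: V_cell. Qed.

Let P := row_base V *m sel_mx (\rank V) b.

Lemma cell_pivot_unit : P \in unitmx.
Proof. by case: V_cell => _ [nz _]; rewrite unitmxE unitfE -plucker_sel. Qed.

Definition cell_basis : 'M[C]_(\rank V, d) := invmx P *m row_base V.

Lemma cell_basis_sel : cell_basis *m sel_mx (\rank V) b = 1%:M.
Proof. by rewrite -mulmxA mulVmx ?cell_pivot_unit. Qed.

Lemma eqmx_cell_basis : (cell_basis == V)%MS.
Proof.
have rbE : row_base V = P *m cell_basis by rewrite mulmxA mulmxV ?cell_pivot_unit ?mul1mx.
apply/andP; split; first by apply: submx_trans (submxMl _ _) _; rewrite eq_row_base.
apply: submx_trans (_ : V <= row_base V)%MS _; first by rewrite eq_row_base.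
by rewrite rbE submxMl.
Qed.

Lemma cell_basis_graded p : (cell_basis *m Mspace F p <= cell_basis)%MS.
Proof.
have /andP[sBV sVB] := eqmx_cell_basis.
apply: submx_trans sVB; case/submxP: sBV => X ->; rewrite -mulmxA.
exact: submx_trans (submxMl X _) (V_graded p).
Qed.

Lemma cell_basis_swap y i : y \in b -> i \notin b -> (y < i)%N ->
  \det (cell_basis *m sel_mx (\rank V) (i |: (b :\ y))) = 0.
Proof.
move=> yb ib yi; case: V_cell => _ [_ plucker_gt].
have neq_b'b : i |: (b :\ y) != b.
  by apply: contraNneq ib => <-; rewrite !inE eqxx.
move/eqP: (plucker_gt _ (bruhat_le_swap yb ib yi) neq_b'b).
rewrite plucker_sel -[row_base V](mulKVmx cell_pivot_unit) -/P -/cell_basis.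
rewrite -mulmxA det_mulmx mulf_eq0 => /orP[|/eqP //].
by move: cell_pivot_unit; rewrite unitmxE unitfE => /negbTE ->.
Qed.

(* [sel_mx _ b *m cell_basis] puts row [c] of [cell_basis] at the [c]-th element of [b]. *)
Definition cell_coords (x : pair d) : C :=
  if rel2 F x then (sel_mx (\rank V) b *m cell_basis) x.2 x.1 else 0.

Lemma cell_basis_rel2 i j : ~~ rel2 F (i, j) -> (sel_mx (\rank V) b *m cell_basis) j i = 0.
Proof.
move=> nr; case jb: (j \in b); last by rewrite sel_mul_mx0 ?jb.
have rj : (rk b j < \rank V)%N by rewrite -card_cell rk_lt_card.
rewrite (sel_mul_mx _ _ jb (c := Ordinal rj)) //.
move: nr; rewrite rel2E negb_and -ltnNge => /orP[Fij | ji].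
  exact: (pivot_graded card_cell cell_basis_sel cell_basis_graded jb (c := Ordinal rj) erefl Fij).
case ib: (i \in b); last first.
  apply: (pivot_swap card_cell cell_basis_sel jb (c := Ordinal rj) erefl (negbT ib)).
  exact: cell_basis_swap (negbT ib) ji.
have ri : (rk b i < \rank V)%N by rewrite -card_cell rk_lt_card.
rewrite (pivot_col cell_basis_sel _ ib (c := Ordinal ri) erefl).
case: eqP => // /(congr1 val) /= e.
by move: ji; rewrite (rk_inj jb ib e) ltnn.
Qed.

Lemma cell_coords_echelon : echelon F b cell_coords.
Proof.
split=> [x nr | x x2 | x x1 x2]; rewrite /cell_coords; first by rewrite (negbTE nr).
  by case: ifP => // _; rewrite sel_mul_mx0.
case: ifP => r12; last first.
  case: eqP => // e; move: r12.
  by case: x e x1 x2 => i j /= -> _ _; rewrite rel2E eqxx leqnn.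
have rj : (rk b x.2 < \rank V)%N by rewrite -card_cell rk_lt_card.
have ri : (rk b x.1 < \rank V)%N by rewrite -card_cell rk_lt_card.
rewrite (sel_mul_mx _ _ x2 (c := Ordinal rj)) //.
rewrite (pivot_col cell_basis_sel _ x1 (c := Ordinal ri)) //.
suff -> : (Ordinal rj == Ordinal ri) = (x.1 == x.2) by [].
apply/eqP/eqP => e; last by apply: val_inj; rewrite /= e.
by apply: (rk_inj x1 x2); move/(congr1 val): e => /= ->.
Qed.

Lemma schubert_cell_echelon : exists2 w, echelon F b w & (V == wmx w)%MS.
Proof.
exists cell_coords; first exact: cell_coords_echelon.
have -> : wmx cell_coords = sel_mx (\rank V) b *m cell_basis.
  apply/matrixP => j i; rewrite mxE /cell_coords /=.
  by case: ifP => // /negbT /cell_basis_rel2 ->.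
have /andP[sBV sVB] := eqmx_cell_basis.
apply/andP; split; last exact: submx_trans (submxMl _ _) sBV.
apply: submx_trans sVB _.
by rewrite -{1}[cell_basis]mul1mx -(trsel_sel_mx card_cell) -mulmxA submxMl.
Qed.

End CellEchelon.

Section SchubertEquations.
Variables (Q0 Q1 : finType) (src tgt : Q1 -> Q0) (d : nat) (F : 'I_d -> Q0).
Variable mu : Q1 -> 'I_d -> 'I_d -> C.
Hypothesis mu_coef : is_coef_data src tgt F mu.
Implicit Types (w : pair d -> C) (v : Q1) (s t : 'I_d).

(* [E(v, t, s) = 0], with [w] extended by zero off [rel2]. *)
Definition schubert_eq w v t s : Prop :=
  \sum_s' \sum_t' mu v s' t' * w (t, t') * w (s', s) = \sum_s' mu v s' t * w (s', s).

Lemma mu_tgt v i j : F j != tgt v -> mu v i j = 0.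
Proof.
move=> h; have [//|nz] := eqVneq (mu v i j) 0.
by case: (mu_coef nz) => _ e; rewrite e eqxx in h.
Qed.

Lemma schubert_eq_lhsE w v s t :
  \sum_t' (\sum_k w (k, s) * mu v k t') * (if F t' == tgt v then w (t, t') else 0)
  = \sum_s' \sum_t' mu v s' t' * w (t, t') * w (s', s).
Proof.
under eq_bigr => t' _ do rewrite mulr_suml.
rewrite exchange_big; apply: eq_bigr=> k _; apply: eq_bigr=> t' _.
case: eqP=> ht; first by ring.
by rewrite mu_tgt ?mulr0 ?mul0r //; apply/eqP.
Qed.

Lemma schubert_eq_not_rel3 w v t s : rel2_supported F w ->
  ~ rel3 src tgt F mu (v, t, s) -> schubert_eq w v t s.
Proof.
move=> w0 nrel3; have rel2_of_nz x : w x != 0 -> rel2 F x.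
  by apply: contraR => /w0 ->.
rewrite /schubert_eq big1 => [|s' _]; last first.
  apply: big1 => t' _; apply/eqP; apply: contraT => nz; case: nrel3.
  move: nz; rewrite !mulf_eq0 !negb_or => /andP[/andP[nz1 /rel2_of_nz r1] /rel2_of_nz r2].
  case: (mu_coef nz1) => e1 e2; move: r1 r2; rewrite !rel2E => /andP[/eqP f1 l1] /andP[/eqP f2 l2].
  by split; [rewrite -f2 | split; [rewrite f1 | exists s', t']].
rewrite big1 // => s' _; apply/eqP; apply: contraT => nz; case: nrel3.
move: nz; rewrite !mulf_eq0 !negb_or => /andP[nz1 /rel2_of_nz r2].
case: (mu_coef nz1) => e1 e2; move: r2; rewrite !rel2E => /andP[/eqP f2 l2].
by split; [rewrite -f2 | split; [by [] | exists s', t]].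
Qed.

(* Row [s] of [wmx_at w (src v) *m Mmap mu v] is [\sum_k w (k, s) * mu v k t'] at column [t'];
   the equations say it lies in the row space of [wmx_at w (tgt v)], with coefficients given by
   the same sums. *)
Lemma wmx_at_subrep w : rel2_supported F w ->
  (forall v t s, F s = src v -> schubert_eq w v t s) -> is_subrep src tgt F mu (wmx_at F w).
Proof.
move=> w0 w_eq; split=> [p|v]; first by rewrite wmx_atE //; apply: submxMl.
apply/submxP.
exists (\matrix_(s, t) (if F s == src v then \sum_k w (k, s) * mu v k t else 0)).
apply/matrixP=> s t0; rewrite !mxE.
case hs: (F s == src v); last first.
  rewrite big1 => [|k _]; last by rewrite !mxE hs mul0r.
  by rewrite big1 // => t _; rewrite !mxE hs mul0r.
under eq_bigr => j _ do rewrite !mxE hs.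
under [RHS]eq_bigr => j _ do rewrite !mxE hs.
rewrite schubert_eq_lhsE w_eq; last exact/eqP.
by apply: eq_bigr=> k _; rewrite mulrC.
Qed.

(* Conversely, the rows [t \in b] of [wmx_at w (tgt v)] are unit vectors, so the coefficients
   expressing row [s] of [wmx_at w (src v) *m Mmap mu v] in them are forced. *)
Lemma subrep_schubert_eq b (N : Q0 -> 'M[C]_d) w : echelon F b w ->
  is_subrep src tgt F mu N -> ((\sum_p N p)%MS == wmx w)%MS ->
  forall v t s, F s = src v -> schubert_eq w v t s.
Proof.
move=> [w0 w_nb w_b] [N_graded N_stable] eqNw v t0 s hs.
have eqN := eqmx_wmx_at N_graded w0 eqNw.
have /submxP[X eX] : (wmx_at F w (src v) *m Mmap mu v <= wmx_at F w (tgt v))%MS.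
  have /andP[_ a] := eqN (src v); have /andP[c _] := eqN (tgt v).
  by apply: submx_trans c; apply: submx_trans (N_stable v); exact: submxMr.
have w_row t t' : t \in b -> w (t, t') = (t == t')%:R.
  move=> tb; case t'b: (t' \in b); first exact: w_b.
  by rewrite w_nb /= ?t'b //; case: eqP => // e; rewrite -e tb in t'b.
have rowE t : (wmx_at F w (src v) *m Mmap mu v) s t = \sum_k w (k, s) * mu v k t.
  by rewrite mxE; apply: eq_bigr => k _; rewrite !mxE hs eqxx.
have XE t : t \in b -> F t = tgt v -> X s t = \sum_k w (k, s) * mu v k t.
  move=> tb ht; rewrite -rowE eX mxE (bigD1 t) // !mxE ht eqxx w_row // eqxx mulr1.
  rewrite big1 ?Monoid.mulm1 // => t' t't; rewrite !mxE; case: ifP => _; last by rewrite mulr0.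
  by rewrite w_row // (eq_sym t t') (negbTE t't) mulr0.
rewrite /schubert_eq -schubert_eq_lhsE.
transitivity (\sum_t' X s t' * (if F t' == tgt v then w (t0, t') else 0)).
  apply: eq_bigr => t' _; case: (F t' =P tgt v) => ht; last by rewrite !mulr0.
  case t'b: (t' \in b); first by rewrite XE.
  by rewrite w_nb ?mulr0 //= t'b.
transitivity ((X *m wmx_at F w (tgt v)) s t0).
  by rewrite mxE; apply: eq_bigr => t' _; rewrite !mxE.
by rewrite -eX rowE; apply: eq_bigr => k _; rewrite mulrC.
Qed.

End SchubertEquations.

Section PartialEvaluations.
Variables (Q0 Q1 : finType) (d : nat) (F : 'I_d -> Q0).
Variable mu : Q1 -> 'I_d -> 'I_d -> C.
Implicit Types (ev : peval d).

Definition peval_val ev (x : pair d) : C := odflt 0 (ev x).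

Definition dom_rel2 ev := forall x, in_dom ev x -> rel2 F x.

Lemma prod_peval_val1 ev (x : pair d) : \prod_z (odflt 0 (ev z)) ^+ ((z == x) : nat) = peval_val ev x.
Proof.
rewrite (bigD1 x) // eqxx expr1 big1 ?Monoid.mulm1 //.
by move=> y yx; rewrite (negbTE yx) expr0.
Qed.

Lemma val_mono1 ev (x : pair d) : val_mono ev (mono1 x) = peval_val ev x.
Proof. by rewrite -prod_peval_val1; apply: eq_bigr => z _; rewrite ffunE. Qed.

Lemma val_mono2 ev (x y : pair d) : val_mono ev (mono2 x y) = peval_val ev x * peval_val ev y.
Proof.
rewrite -!prod_peval_val1 -big_split; apply: eq_bigr => z _.
by rewrite ffunE exprD.
Qed.

Lemma peval_val_rel2 ev : dom_rel2 ev -> rel2_supported F (peval_val ev).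
Proof.
move=> dom_ev x nx; rewrite /peval_val; case e: (ev x) => [c|] //.
have : in_dom ev x by rewrite /in_dom e.
by move/dom_ev; rewrite (negbTE nx).
Qed.

Lemma evalE_Eterms ev tau :
  evalE F mu ev tau = \sum_(x <- Eterms F mu tau) x.1 * val_mono ev x.2.
Proof.
rewrite /evalE /monosE big_filter big_mkcond.
transitivity (\sum_(m <- undup [seq x.2 | x <- Eterms F mu tau])
               \sum_(x <- Eterms F mu tau) (if x.2 == m then x.1 * val_mono ev x.2 else 0)).
  apply: eq_bigr => m _.
  have -> : (if Defs.coefE F mu tau m != 0 then Defs.coefE F mu tau m * val_mono ev m else 0)
     = Defs.coefE F mu tau m * val_mono ev m by case: eqP => [->|]; rewrite ?mul0r.
  rewrite /Defs.coefE mulr_suml big_mkcond; apply: eq_bigr => x _.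
  by case: eqP => [->|_]; rewrite ?mul0r.
rewrite exchange_big; apply: eq_big_seq => x xin.
rewrite -big_mkcond (big_rem x.2) ?mem_undup; last by apply/mapP; exists x.
rewrite eqxx big1_seq ?Monoid.mulm1 // => m /andP[/eqP e].
by rewrite mem_rem_uniq ?undup_uniq // inE e eqxx.
Qed.

Lemma Eterms_val ev v t s : dom_rel2 ev ->
  \sum_(x <- Eterms F mu (v, t, s)) x.1 * val_mono ev x.2 =
  \sum_s' \sum_t' mu v s' t' * peval_val ev (t, t') * peval_val ev (s', s)
  - \sum_s' mu v s' t * peval_val ev (s', s).
Proof.
move=> dom_ev; rewrite /Eterms big_cat !big_map !big_enum; congr (_ + _).
  rewrite pair_bigA big_mkcond; apply: eq_bigr => p _; rewrite val_mono2 inE.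
  case: ifP => h; first by rewrite /= mulrA.
  case: (mu v p.1 p.2 =P 0) => [->|/eqP nz]; first by rewrite !mul0r.
  rewrite /gamma_arrow nz andTb in h.
  case: (boolP (rel2 F (t, p.2))) => r1; last by rewrite (peval_val_rel2 dom_ev r1) mulr0 mul0r.
  by rewrite r1 andTb in h; rewrite (peval_val_rel2 dom_ev (negbT h)) mulr0.
rewrite -sumrN big_mkcond; apply: eq_bigr => i _; rewrite inE /= val_mono1.
case: ifP => h; first by rewrite mulNr.
case: (mu v i t =P 0) => [->|/eqP nz]; first by rewrite mul0r oppr0.
rewrite /gamma_arrow nz andTb in h.
by rewrite (peval_val_rel2 dom_ev (negbT h)) mulr0 oppr0.
Qed.

Lemma evalE_schubert_eq ev v t s : dom_rel2 ev ->
  (evalE F mu ev (v, t, s) = 0) <-> schubert_eq mu (peval_val ev) v t s.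
Proof.
move=> dom_ev; rewrite evalE_Eterms Eterms_val // /schubert_eq.
by split=> [/eqP|->]; [rewrite subr_eq0 => /eqP|rewrite subrr].
Qed.

Lemma monosE_rel2 tau m (x : pair d) : m \in monosE F mu tau -> (0 < m x)%N -> rel2 F x.
Proof.
rewrite /monosE mem_filter => /andP[_]; rewrite mem_undup => /mapP[y yin ->].
case: tau yin => [[v t] s]; rewrite /Eterms mem_cat => /orP[] /mapP[z];
  rewrite mem_enum inE => hz -> /=; rewrite ffunE.
  case/and3P: hz => _ r1 r2.
  by case: eqP => [->|_] //; case: eqP => [->|_].
by case/andP: hz => _ r; case: eqP => [->|_].
Qed.

(* When [ev] is defined on all of [rel2], every link of [Sigma] restricts to the empty monomial. *)
Lemma mu_beta_total ev tau : (forall x, rel2 F x -> in_dom ev x) -> dom_rel2 ev ->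
  mu_beta F mu ev tau [ffun => 0%N] = evalE F mu ev tau.
Proof.
move=> ev_total dom_ev; rewrite /mu_beta /evalE big_seq_cond [RHS]big_seq_cond.
apply: eq_big => [m|m /andP[min _]].
  case min: (m \in monosE F mu tau); rewrite ?andFb ?andTb //.
  apply/eqP/ffunP => x; rewrite !ffunE; case: ifP => // nd.
  case: (posnP (m x)) => // /(monosE_rel2 min) /ev_total.
  by rewrite nd.
congr (_ * _); rewrite /val_mono big_mkcond; apply: eq_bigr => x _.
case: ifP => // nd.
case: (posnP (m x)) => [->|]; first by rewrite expr0.
by move=> /(monosE_rel2 min) /ev_total; rewrite nd.
Qed.

End PartialEvaluations.

Section BetaState.
Variables (Q0 Q1 : finType) (src tgt : Q1 -> Q0) (d : nat) (F : 'I_d -> Q0).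
Variable mu : Q1 -> 'I_d -> 'I_d -> C.
Hypothesis mu_coef : is_coef_data src tgt F mu.
Variable beta : {set 'I_d}.
Implicit Types (ev : peval d) (w : pair d -> C).

Lemma trivial_state_solvable ev :
  trivial_state src tgt F mu ev -> solvable (Sigma_beta src tgt F mu ev).
Proof.
case=> [no_pair [no_triple [no_edge _]]].
exists (fun _ _ => true); split; first by move=> tau /no_triple.
split; first by move=> pi /no_pair.
case=> x cycle; elim: cycle => [a b ab | //].
by case: a ab => [pi|tau]; case: b => [pi'|tau'] //= [e _]; [apply: no_edge e | apply: no_edge e].
Qed.

Lemma trivial_state_total ev : trivial_state src tgt F mu ev ->
  forall x, rel2 F x -> in_dom ev x.
Proof. by case=> no_pair _ x r; apply: contraT => nd; case: (no_pair x). Qed.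

Lemma f_beta_echelon ev : dom_rel2 F ev -> extends_f_beta F beta ev ->
  echelon F beta (peval_val ev).
Proof.
move=> dom_ev ext_ev; have ev0 := peval_val_rel2 dom_ev.
have evE x : rel2 F x -> f_beta beta x != None -> peval_val ev x = odflt 0 (f_beta beta x).
  by move=> r nn; rewrite /peval_val ext_ev.
split=> [x | [i j] /= jb | [i j] /= ib jb]; first exact: ev0.
  have [r|] := boolP (rel2 F (i, j)); last exact: ev0.
  have fb : f_beta beta (i, j) = Some 0.
    rewrite /f_beta /= (negbTE jb); case: ifP => // ib.
    by case: eqP => // eij; rewrite -eij ib in jb.
  by rewrite evE ?fb.
have [r|nr] := boolP (rel2 F (i, j)).
  have fb : f_beta beta (i, j) = Some (i == j)%:R by rewrite /f_beta /= ib; case: eqP.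
  by rewrite evE ?fb.
by rewrite ev0 //; case: eqP => // eij; rewrite eij rel2E eqxx leqnn in nr.
Qed.

(* With no links in the [beta]-state, [mu_beta ev tau 0] (which is [evalE ev tau]) vanishes. *)
Lemma trivial_state_schubert_eq ev : dom_rel2 F ev -> trivial_state src tgt F mu ev ->
  forall v t s, F s = src v -> schubert_eq mu (peval_val ev) v t s.
Proof.
move=> dom_ev triv v t s _.
have [rel3_vts | nrel3] := classic (rel3 src tgt F mu (v, t, s)); last first.
  by apply: (schubert_eq_not_rel3 mu_coef _ nrel3); apply: peval_val_rel2.
apply/(evalE_schubert_eq mu v t s dom_ev).
rewrite -mu_beta_total //; last exact: trivial_state_total.
apply/eqP; apply: contraT => nz; case: triv => _ [_ [_ no_link]].
by case: (no_link _ _ (conj rel3_vts nz)).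
Qed.

Definition peval_of w : peval d := fun x => if rel2 F x then Some (w x) else None.

Lemma dom_peval_of w : dom_rel2 F (peval_of w).
Proof. by move=> x; rewrite /in_dom /peval_of; case: ifP. Qed.

Lemma peval_val_of w : rel2_supported F w -> peval_val (peval_of w) = w.
Proof.
move=> w0; apply: functional_extensionality => x; rewrite /peval_val /peval_of.
by case: ifP => // /negbT /w0 ->.
Qed.

Lemma peval_of_partial_eval w : rel2_supported F w ->
  (forall v t s, F s = src v -> schubert_eq mu w v t s) ->
  is_partial_eval src tgt F mu (peval_of w).
Proof.
move=> w0 w_eq; split=> [|[[v t] s] pi [hs _] [rel2_pi _] _]; first exact: dom_peval_of.
split; first by rewrite /in_dom /peval_of rel2_pi.
by apply/(evalE_schubert_eq mu v t s (@dom_peval_of w)); rewrite peval_val_of //; apply: w_eq.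
Qed.

Lemma echelon_extends_f_beta w : echelon F beta w -> extends_f_beta F beta (peval_of w).
Proof.
case=> _ w_nb w_b [i j] r; rewrite /peval_of r /f_beta /=.
case ib: (i \in beta); case jb: (j \in beta) => //= _.
- by rewrite (w_b (i, j)) //=; case: eqP.
- by rewrite (w_nb (i, j)) /= ?jb //; case: eqP => // eij; rewrite eij jb in ib.
- by rewrite (w_nb (i, j)) /= ?jb.
Qed.

Lemma ev_beta_unique_echelon ev w : is_ev_beta src tgt F mu beta ev ->
  (forall x, rel2 F x -> in_dom ev x) -> echelon F beta w ->
  (forall v t s, F s = src v -> schubert_eq mu w v t s) -> wmx w = wmx (peval_val ev).
Proof.
case=> [[dom_ev _] [_ ev_min]] ev_total w_ech w_eq; case: (w_ech) => w0 _ _.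
have ext := ev_min _ (peval_of_partial_eval w0 w_eq) (echelon_extends_f_beta w_ech).
apply/matrixP => j i; rewrite !mxE.
have [r|nr] := boolP (rel2 F (i, j)); last by rewrite w0 ?(peval_val_rel2 dom_ev).
by rewrite /peval_val -(ext _ (ev_total _ r)) /peval_of r.
Qed.

End BetaState.

Theorem corollary2p21
  (Q0 Q1 : finType) (src tgt : Q1 -> Q0) (d : nat) (F : 'I_d -> Q0)
  (mu : Q1 -> 'I_d -> 'I_d -> C)
  (Hmu : is_coef_data src tgt F mu)
  (beta : {set 'I_d})
  (Hnc : ~ contradictory src tgt F mu beta)
  (ev : peval d) (Hev : is_ev_beta src tgt F mu beta ev)
  (Htriv : trivial_state src tgt F mu ev) :
  solvable (Sigma_beta src tgt F mu ev) /\ CbetaM_is_point src tgt F mu beta.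
Proof.
split; first exact: trivial_state_solvable.
have [[dom_ev _] [ext_ev _]] := Hev.
have ev_total := trivial_state_total Htriv.
have w_ech := f_beta_echelon dom_ev ext_ev.
have w_eq := trivial_state_schubert_eq Hmu dom_ev Htriv.
have [w0 _ _] := w_ech.
exists (wmx_at F (peval_val ev)); split.
  split; first exact: wmx_at_subrep.
  exact: echelon_schubert_cell w_ech _ (sumsmx_wmx_at _ _).
move=> N [N_subrep N_cell] p; have N_graded := N_subrep.1.
have [w' w'_ech eqNw'] := schubert_cell_echelon (sumsmx_graded_Mspace N_graded) N_cell.
have w'_eq := subrep_schubert_eq Hmu w'_ech N_subrep eqNw'.
rewrite (ev_beta_unique_echelon Hev ev_total w'_ech w'_eq) in eqNw'.
exact: (eqmx_wmx_at N_graded w0 eqNw').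
Qed.
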